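(* The function $\overrightarrow{\mathrm{AC}}$ does not satisfy the triangle inequality: there exist languages $X,Y,Z$ over a finite alphabet with $\overrightarrow{\mathrm{AC}}(X,Z)>\overrightarrow{\mathrm{AC}}(X,Y)+\overrightarrow{\mathrm{AC}}(Y,Z)$.
   Context: For words $x,y$, $\mathrm{ed}(x,y)$ is the Levenshtein edit distance (minimum number of single-letter insertions, deletions and substitutions transforming $x$ into $y$). For languages $X,Y$, \[ \overrightarrow{\mathrm{AC}}(X,Y)=\lim_{n\to\infty}\ \sup_{x\in X,\ |x|\ge n}\ \inf_{y\in Y}\frac{\mathrm{ed}(x,y)}{|x|}. \] *)

From mathcomp Require Import all_boot all_order all_algebra.
From mathcomp Require Import all_classical all_reals all_analysis.
Set Implicit Arguments. Unset Strict Implicit. Unset Printing Implicit Defensive.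
Import Order.TTheory GRing.Theory Num.Theory.
Local Open Scope classical_set_scope.
Local Open Scope ring_scope.

Section Edit.
Variable A : eqType.

Definition edit1 (x y : seq A) : Prop :=
  exists (u v : seq A) (a b : A),
    (x = u ++ a :: v /\ y = u ++ v) \/
    (x = u ++ v /\ y = u ++ a :: v) \/
    (x = u ++ a :: v /\ y = u ++ b :: v).

Fixpoint reach (n : nat) (x y : seq A) : Prop :=
  match n with
  | 0 => x = y
  | n'.+1 => exists z, edit1 x z /\ reach n' z y
  end.

Definition ed (x y : seq A) : nat :=
  xget 0%N [set n | reach n x y /\ forall m, reach m x y -> (n <= m)%N].
End Edit.

Section ACsec.
Variables (R : realType) (A : finType).

Definition acn (X Y : set (seq A)) (n : nat) : \bar R :=
  ereal_sup [set ereal_inf [set (((ed x y)%:R / (size x)%:R : R))%:E | y in Y]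
            | x in [set x | X x /\ (n <= size x)%N]].

Definition ACdir (X Y : set (seq A)) : \bar R := limn (acn X Y).
End ACsec.

(* Over a one-letter alphabet a word is its length and ed is the distance of
   lengths.  Let L_p be the words of length p b^k (k : nat) for a large base b.
   If p <= q and q (b + 1) <= 2 p b, the word of L_q closest to a word of
   length p b^k is the one of length q b^k, because all other lengths in L_q
   are off by a factor b; hence AC(L_p, L_q) = q/p - 1.  Since q/p is
   multiplicative, (20/16 - 1) + (25/20 - 1) = 1/2 < 9/16 = 25/16 - 1. *)
From mathcomp Require Import all_boot all_order all_algebra.
From mathcomp Require Import all_classical all_reals all_analysis.
From mathcomp Require Import zify ring lra.
Import Order.TTheory GRing.Theory Num.Theory.
Local Open Scope ring_scope.

Section EditDistance.
Variable A : eqType.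
Implicit Types (x y : seq A) (a : A).

Lemma edP x y d :
  reach d x y -> (forall m, reach m x y -> (d <= m)%N) -> ed x y = d.
Proof.
move=> reach_d min_d; rewrite /ed.
have [|ed_reach ed_min] :=
  @xgetPex _ 0%N [set n | reach n x y /\ forall m, reach m x y -> (n <= m)%N].
  by exists d.
by apply/eqP; rewrite eqn_leq ed_min //= min_d.
Qed.

Lemma edit1_size x y :
  edit1 x y -> (size x <= size y + 1)%N /\ (size y <= size x + 1)%N.
Proof.
by move=> [u [v [a [b [[-> ->]|[[-> ->]|[-> ->]]]]]]]; rewrite !size_cat /=; lia.
Qed.

Lemma reach_size n x y :
  reach n x y -> (size x <= size y + n)%N /\ (size y <= size x + n)%N.
Proof.
elim: n x => [|n IHn] x /=; first by move=> ->; lia.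
by move=> [z [/edit1_size xz /IHn zy]]; lia.
Qed.

Lemma reach_nseq_del a m k : reach k (nseq (m + k) a) (nseq m a).
Proof.
elim: k => [|k IHk] /=; first by rewrite addn0.
exists (nseq (m + k) a); split => //.
by exists [::], (nseq (m + k) a), a, a; left; rewrite addnS.
Qed.

Lemma reach_nseq_ins a m k : reach k (nseq m a) (nseq (m + k) a).
Proof.
elim: k m => [|k IHk] m /=; first by rewrite addn0.
exists (nseq m.+1 a); split; first by exists [::], (nseq m a), a, a; right; left.
by rewrite addnS -addSn.
Qed.

Lemma ed_nseq a m n : ed (nseq m a) (nseq n a) = (m - n + (n - m))%N.
Proof.
apply: edP => [|d /reach_size]; last by rewrite !size_nseq; lia.
have [nm|mn] := leqP n m.
  rewrite (_ : n - m = 0)%N ?addn0; last by lia.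
  by have := reach_nseq_del a n (m - n); rewrite subnKC.
rewrite (_ : m - n = 0)%N ?add0n; last by lia.
by have := reach_nseq_ins a m (n - m); rewrite subnKC // ltnW.
Qed.

End EditDistance.

Lemma unit_seqE (s : seq unit) : s = nseq (size s) tt.
Proof. by elim: s => [|[] s IHs] //=; rewrite -IHs. Qed.

Lemma ed_unit (s t : seq unit) :
  ed s t = (size s - size t + (size t - size s))%N.
Proof. by rewrite {1}(unit_seqE s) {1}(unit_seqE t) ed_nseq. Qed.

Definition geom_words (b p : nat) : set (seq unit) :=
  [set s | exists k, size s = (p * b ^ k)%N].

Section GeometricLanguages.
Variables (b p q : nat).
Hypotheses (p_gt0 : (0 < p)%N) (b_gt1 : (1 < b)%N) (p_le_q : (p <= q)%N)
           (q_small : (q * b.+1 <= 2 * p * b)%N).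

Lemma expn_spread j k :
  (b ^ j = b ^ k \/ b * b ^ j <= b ^ k \/ b * b ^ k <= b ^ j)%N.
Proof.
by case: (ltngtP j k) => [jk|kj|->]; [right; left | right; right | left];
  rewrite // -expnS leq_pexp2l // ltnW.
Qed.

(* Only the case [b U <= T] needs [q_small]: scaled by b it reads
   q U b + (q - p) T b <= q T + (q - p) T b <= p T b. *)
Lemma length_gap T U : (U = T \/ b * U <= T \/ b * T <= U)%N ->
  ((q - p) * T <= p * T - q * U + (q * U - p * T))%N.
Proof.
have b_gt0 : (0 < b)%N by apply: ltnW.
rewrite mulnBl => -[->|[UT|TU]]; first by lia.
- suff : ((q * T - p * T) * b + q * U * b <= p * T * b)%N.
    by rewrite -mulnDl leq_pmul2r //; lia.
  have qUT : (q * U * b <= q * T)%N by rewrite -mulnA [(U * b)%N]mulnC leq_mul.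
  have qbT : (q * b.+1 * T <= 2 * p * b * T)%N by rewrite leq_mul.
  have pqT : (p * T <= q * T)%N by rewrite leq_mul.
  by rewrite mulnBl; nia.
- have qTU : (q * T <= q * U)%N by rewrite leq_mul // (leq_trans _ TU) ?leq_pmull.
  by lia.
Qed.

Variable R : realType.

Let r : R := (q - p)%:R / p%:R.

Lemma ereal_inf_ed_geom_words x : geom_words b p x ->
  ereal_inf [set ((ed x y)%:R / (size x)%:R : R)%:E | y in geom_words b q] = r%:E.
Proof.
move=> [k xk].
have bk_gt0 : (0 < b ^ k)%N by rewrite expn_gt0 ltnW.
have size_gt0 : (0 : R) < (size x)%:R by rewrite ltr0n xk muln_gt0 p_gt0.
apply/le_anti/andP; split.
  apply: ereal_inf_lbound; exists (nseq (q * b ^ k) tt).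
    by exists k; rewrite size_nseq.
  rewrite ed_unit size_nseq xk (_ : p * b ^ k - q * b ^ k = 0)%N; last by nia.
  rewrite add0n -mulnBl /r !natrM; congr (_%:E); field.
  by rewrite !pnatr_eq0 -!lt0n bk_gt0 p_gt0.
apply: le_ereal_inf_tmp => _ [y [j yj] <-].
rewrite lee_fin ler_pdivlMr // ed_unit xk yj /r natrM mulrA.
rewrite mulfVK ?pnatr_eq0 -?lt0n // -natrM ler_nat.
exact: length_gap (expn_spread j k).
Qed.

Lemma acn_geom_words n : @acn R unit (geom_words b p) (geom_words b q) n = r%:E.
Proof.
apply/le_anti/andP; split.
  by apply: ge_ereal_sup => _ [x [px _] <-]; rewrite ereal_inf_ed_geom_words.
apply: ereal_sup_ubound; exists (nseq (p * b ^ n) tt).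
  split; first by exists n; rewrite size_nseq.
  by rewrite size_nseq (leq_trans (ltnW (ltn_expl n b_gt1))) // leq_pmull.
by rewrite ereal_inf_ed_geom_words //; exists n; rewrite size_nseq.
Qed.

Lemma ACdir_geom_words :
  @ACdir R unit (geom_words b p) (geom_words b q) = ((q - p)%:R / p%:R : R)%:E.
Proof. by rewrite /ACdir (funext acn_geom_words) lim_cst. Qed.

End GeometricLanguages.

Theorem mainTheorem12 (R : realType) :
  exists (A : finType) (X Y Z : set (seq A)) (a b c : R),
    @ACdir R A X Z = a%:E /\ @ACdir R A X Y = b%:E /\ @ACdir R A Y Z = c%:E /\ b + c < a.
Proof.
exists unit, (geom_words 100 16), (geom_words 100 20), (geom_words 100 25).
exists (9%:R / 16%:R), (4%:R / 16%:R), (5%:R / 20%:R).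
do 3 (split; first exact: ACdir_geom_words).
lra.
Qed.
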